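(* Let $\epsilon>0$ and let $E\subset\mathbb{R}^2$ be a measurable set with $[0,1]^2\subset E\subset[-\epsilon,1+\epsilon]^2$. Let $0<s''<s'<s<2s''$, and let $a,b$ be real numbers with $0\le a$, $a+s\le 1$, $0\le b-s$, $b\le 1$. Let $v,v',v''\in\mathbb{R}^2$ and suppose that $E_2(b-s,b)$ complements $E_1(a,a+s)+v$, $E_2(b-s',b)$ complements $E_1(a,a+s')+v'$, and $E_2(b-s'',b)$ complements $E_1(a,a+s'')+v''$. Then the points $v,v',v''$ are collinear. Moreover, if $v\neq v''$, the absolute value of the slope of the line through $v$ and $v''$ is at most $\epsilon(2s''-s)^{-1}$.
   Context: Coordinates in $\mathbb{R}^2$ are $(x_1,x_2)$. For $0\le c\le d\le 1$ define $E_1(c,d)=(E\cap\{c\le x_1\le d,\ x_2\le 0\})\cup\{c\le x_1\le d,\ x_2\ge 0\}$ and $E_2(c,d)=(E\cap\{c\le x_1\le d,\ x_2\ge 0\})\cup\{c\le x_1\le d,\ x_2\le 0\}$. Let $S_{c,d}=[c,d]\times\mathbb{R}$. For $v=(v_1,v_2)\in\mathbb{R}^2$ and $0\le c'\le d'\le 1$, we say that $E_2(c,d)$ complements $E_1(c',d')+v$ if, up to sets of Lebesgue measure zero, the sets $E_2(c,d)$ and $E_1(c',d')+v$ are disjoint and their union equals $S_{c,d}$ (so $E_1(c',d')+v$ sits above $E_2(c,d)$, and necessarily $c'+v_1=c$, $d'+v_1=d$). *)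

From HB Require Import structures.
From mathcomp Require Import all_boot all_order all_algebra.
From mathcomp Require Import all_classical all_reals all_analysis.
Set Implicit Arguments. Unset Strict Implicit. Unset Printing Implicit Defensive.
Import Order.TTheory GRing.Theory Num.Theory.
Local Open Scope classical_set_scope.
Local Open Scope ring_scope.

Definition plane (R : realType) := (measurableTypeR R * measurableTypeR R)%type.

Definition leb2 (R : realType) : set (plane R) -> \bar R :=
  (@lebesgue_measure R \x @lebesgue_measure R)%E.

Definition null2 (R : realType) (A : set (plane R)) : Prop :=
  (@leb2 R).-negligible A.

(* Lebesgue measurable sets of the plane: differ from a Borel set by a null set
   (this is the completion of the product of Borel sigma-algebras). *)
Definition leb_measurable2 (R : realType) (E : set (plane R)) : Prop :=
  exists B : set (plane R), measurable B /\ null2 ((E `\` B) `|` (B `\` E)).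

Definition E1 (R : realType) (E : set (plane R)) (c d : R) : set (plane R) :=
  (E `&` [set x | c <= x.1 <= d /\ x.2 <= 0]) `|` [set x | c <= x.1 <= d /\ 0 <= x.2].

Definition E2 (R : realType) (E : set (plane R)) (c d : R) : set (plane R) :=
  (E `&` [set x | c <= x.1 <= d /\ 0 <= x.2]) `|` [set x | c <= x.1 <= d /\ x.2 <= 0].

Definition strip (R : realType) (c d : R) : set (plane R) :=
  [set x | c <= x.1 <= d].

Definition translate (R : realType) (A : set (plane R)) (v : R * R) : set (plane R) :=
  [set x | A (x.1 - v.1, x.2 - v.2)].

(* "E_2(c,d) complements E_1(c',d') + v": up to null sets, disjoint with union S_{c,d}. *)
Definition complements (R : realType) (E : set (plane R)) (c d c' d' : R) (v : R * R) : Prop :=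
  let A := E2 E c d in
  let B := translate (E1 E c' d') v in
  null2 (A `&` B) /\
  null2 ((strip c d `\` (A `|` B)) `|` ((A `|` B) `\` strip c d)).

Definition square (R : realType) (lo hi : R) : set (plane R) :=
  [set x | lo <= x.1 <= hi /\ lo <= x.2 <= hi].

From mathcomp Require Import all_boot all_order all_algebra.
From mathcomp Require Import all_classical all_reals all_analysis.
From mathcomp Require Import measurable_realfun ring lra.
Import Order.TTheory GRing.Theory Num.Theory.
Set Implicit Arguments. Unset Strict Implicit. Unset Printing Implicit Defensive.
Local Open Scope classical_set_scope.
Local Open Scope ring_scope.

(* Write G = E_1(a, a+s).  Comparing the complementarity relations for s and
   for s1 < s shows that G agrees, up to a null set, with its translate by
   v - v1 on the strip a <= x_1 <= a + s1, and the relations also force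
   v1_1 = b - s1 - a.  Since G contains the upper half of its strip but lies
   above height -eps, such an agreement on a window inside [a, a+s] forces a
   vertical shift of at most eps.  Agreements compose, so iterating
   w = v - v'' about s''/(s - s'') times bounds the slope of w.  For the
   collinearity, alternate steps by w' = v - v' and back by w like a rotation:
   the horizontal shift stays in [-(s - s''), s - s''], while the linear form
   vanishing on w grows by a fixed amount at each step, which must therefore be
   zero. *)

Lemma natr_mul_bounded_eq0 (R : archiFieldType) (M c : R) :
  (forall n : nat, `|n%:R * c| <= M) -> c = 0.
Proof.
move=> bounded; have [//|c_neq0] := eqVneq c 0.
have c_gt0 : 0 < `|c| by rewrite normr_gt0.
have := bounded (Num.truncn (M / `|c|)).+1.
rewrite normrM normr_nat -ler_pdivlMr // leNgt => /negP; case.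
exact: truncnS_gt.
Qed.

Lemma exists_natr_mul_bracket (R : archiFieldType) (d L : R) : 0 < d -> 0 < L ->
  exists k : nat, k%:R * d < L <= k.+1%:R * d.
Proof.
move=> d_gt0 L_gt0.
have ex_n : exists n : nat, L <= n%:R * d.
  by exists (Num.truncn (L / d)).+1; rewrite -ler_pdivrMr //; exact/ltW/truncnS_gt.
case: (ex_minnP ex_n) => -[|k] L_le k_min; first by move: L_le; rewrite mul0r leNgt L_gt0.
exists k; rewrite L_le andbT ltNge; apply/negP => /k_min.
by rewrite ltnn.
Qed.

Section plane_measure.
Context {R : realType}.
Local Notation lam := (@lebesgue_measure R).
Implicit Types (A B C : set (plane R)) (u : R * R).

Let measurable_shift (t : R) : measurable_fun setT (fun x : R => x - t).
Proof. exact: measurable_funB. Qed.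

Lemma lebesgue_measure_shift (t : R) (A : set R) : measurable A ->
  lam ((fun x => x - t) @^-1` A) = lam A.
Proof.
move=> mA; pose f (x : R) : measurableTypeR R := x - t.
have mf : measurable_fun setT f := measurable_shift t.
rewrite -[LHS]/(pushforward lam f A).
apply/esym/lebesgue_measure_unique => //= _ [[a b]] _ <-.
transitivity (lam `](a + t), (b + t)]%classic).
  by rewrite !lebesgue_measure_itv /= !lte_fin ltrD2r -!EFinD opprD addrACA subrr addr0.
by congr (lam _); apply/seteqP; split => x /=; rewrite /f !in_itv /= ltrBrDr lerBlDr.
Qed.

Let translation u (x : plane R) : plane R := (x.1 - u.1, x.2 - u.2).

Let measurable_translation u : measurable_fun setT (translation u).
Proof.
apply: measurable_fun_pair.
- exact: measurableT_comp (measurable_shift u.1) measurable_fst.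
- exact: measurableT_comp (measurable_shift u.2) measurable_snd.
Qed.

Lemma leb2_translate u A : measurable A -> leb2 (translate A u) = leb2 A.
Proof.
move=> mA; have mf := measurable_translation u.
rewrite -[LHS]/(pushforward (@leb2 R) (translation u) A).
apply/esym/product_measure_unique => // X Y mX mY.
transitivity ((lam \x lam)%E ((fun x => x - u.1) @^-1` X `*` (fun y => y - u.2) @^-1` Y)).
  by [].
rewrite product_measure1E; first by congr (_ * _)%E; exact: lebesgue_measure_shift.
all: by rewrite -[X in measurable X]setTI; exact: measurable_shift.
Qed.

Lemma null2_translate u A : null2 A -> null2 (translate A u).
Proof.
move=> [N [mN N0 AN]]; exists (translate N u); split => //.
- by rewrite -[X in measurable X]setTI; exact: measurable_translation.
- by rewrite leb2_translate.
- by move=> x /AN.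
Qed.

Definition rectangle (p q y0 y1 : R) : set (plane R) :=
  [set x | p <= x.1 <= q /\ y0 <= x.2 <= y1].

Lemma rectangleE (p q y0 y1 : R) :
  rectangle p q y0 y1 = `[p, q]%classic `*` `[y0, y1]%classic.
Proof. by apply/seteqP; split => x; rewrite /rectangle /= !in_itv. Qed.

Lemma leb2_rectangle (p q y0 y1 : R) : p < q -> y0 < y1 ->
  leb2 (rectangle p q y0 y1) = ((q - p) * (y1 - y0))%:E.
Proof.
move=> pq y01; rewrite rectangleE [leb2 _]product_measure1E //.
change (lam `[p, q]%classic * lam `[y0, y1]%classic = ((q - p) * (y1 - y0))%:E)%E.
by rewrite !lebesgue_measure_itv /= !lte_fin pq y01 -EFinM.
Qed.

Lemma null2_rectangle (p q y0 y1 : R) : p < q -> y0 < y1 ->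
  ~ null2 (rectangle p q y0 y1).
Proof.
move=> pq y01 [N [mN N0 rectN]].
have : (leb2 (rectangle p q y0 y1) <= leb2 N)%E.
  by apply: le_measure => //; rewrite inE // rectangleE; exact: measurableX.
rewrite [leb2 N]N0 leb2_rectangle // lee_fin leNgt => /negP; apply.
by apply: mulr_gt0; rewrite subr_gt0.
Qed.

Lemma rectangle_ae_strip_ge (p q y0 y1 c d : R) : p < q -> y0 < y1 ->
  null2 (rectangle p q y0 y1 `\` strip c d) -> c <= p.
Proof.
move=> pq y01 N; rewrite leNgt; apply/negP => pc.
have p_lt_m : p < Num.min q c by rewrite lt_min pq.
have m_le_q : Num.min q c <= q by rewrite ge_min lexx.
have m_le_c : Num.min q c <= c by rewrite ge_min lexx orbT.
apply: (@null2_rectangle p ((p + Num.min q c) / 2) y0 y1); [lra | by [] |].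
apply: negligibleS N => x /= [/andP[px xm] xy]; split; first by split=> //; apply/andP; split; lra.
by move=> /andP[cx _]; lra.
Qed.
End plane_measure.

Section strip_agreement.
Context {R : realType}.
Implicit Types (A B C G : set (plane R)) (u : R * R).

Definition ae_eq2 A B : Prop := null2 (A `+` B).

Lemma ae_eq2_sym A B : ae_eq2 A B -> ae_eq2 B A.
Proof. by rewrite /ae_eq2 setYC. Qed.

Lemma ae_eq2_trans A B C : ae_eq2 A B -> ae_eq2 B C -> ae_eq2 A C.
Proof.
move=> AB BC; apply: negligibleS (negligibleU AB BC).
rewrite (_ : A `+` C = (A `+` B) `+` (B `+` C)); last first.
  by rewrite setYA -(setYA A) setYK setY0.
by move=> x [[? _]|[? _]]; [left|right].
Qed.

Lemma ae_eq2_setI A B C : ae_eq2 A B -> ae_eq2 (A `&` C) (B `&` C).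
Proof. by move=> AB; rewrite /ae_eq2 -setIYl; apply: negligibleS AB; exact: subIsetl. Qed.

Lemma ae_eq2_translate u A B : ae_eq2 A B -> ae_eq2 (translate A u) (translate B u).
Proof. exact: null2_translate. Qed.

Lemma ae_eq2_complement S A B : null2 (A `&` B) -> ae_eq2 S (A `|` B) ->
  ae_eq2 B (S `\` A).
Proof.
move=> AB S_AB; apply: negligibleS (negligibleU AB S_AB) => x.
case=> [[Bx nSAx]|[[Sx nAx] nBx]]; last by right; left; split => // -[].
have [Ax|nAx] := pselect (A x); first by left.
by right; right; split; [right | move=> Sx; apply: nSAx].
Qed.

Lemma translate_translate A u u' : translate (translate A u) u' = translate A (u + u').
Proof. by apply/funext => x; rewrite /translate /=; congr A; congr pair; ring. Qed.

Lemma translate0 A : translate A 0 = A.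
Proof. by apply/funext => -[x1 x2]; rewrite /translate /= !subr0. Qed.

Lemma translateI A B u : translate (A `&` B) u = translate A u `&` translate B u.
Proof. by []. Qed.

Lemma translate_strip (c d : R) u : translate (strip c d) u = strip (c + u.1) (d + u.1).
Proof. by apply/funext => x; rewrite /translate /strip /= lerBrDr lerBlDr. Qed.

Definition agrees (G : set (plane R)) u (p q : R) : Prop :=
  ae_eq2 (translate G u `&` strip p q) (G `&` strip p q).

Lemma agreesS G u (p q p' q' : R) : p <= p' -> q' <= q ->
  agrees G u p q -> agrees G u p' q'.
Proof.
move=> pp' q'q Gu; rewrite /agrees (_ : strip p' q' = strip p q `&` strip p' q').
  by rewrite !setIA; exact: ae_eq2_setI.
by apply/esym/setIidr => x /andP[? ?]; apply/andP; split; lra.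
Qed.

Lemma agrees0 G (p q : R) : agrees G 0 p q.
Proof. by rewrite /agrees /ae_eq2 translate0 setYK; exact: negligible_set0. Qed.

Lemma agreesD G u u' (p q : R) :
  agrees G u p q -> agrees G u' (p - u.1) (q - u.1) -> agrees G (u + u') p q.
Proof.
move=> Gu /(ae_eq2_translate u).
rewrite !translateI translate_translate translate_strip !subrK [u' + u]addrC => Gu'.
exact: ae_eq2_trans Gu' Gu.
Qed.

Lemma agreesN G u (p q : R) : agrees G u p q -> agrees G (- u) (p - u.1) (q - u.1).
Proof.
move=> /(ae_eq2_translate (- u)).
rewrite !translateI translate_translate subrr translate0 translate_strip.
exact: ae_eq2_sym.
Qed.

Definition agrees_within (G : set (plane R)) u (lo hi : R) : Prop :=
  exists p q, [/\ lo <= p, p < q, q <= hi, lo <= p - u.1 & q - u.1 <= hi] /\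
              agrees G u p q.

Lemma agrees_withinS G u (lo hi lo' hi' : R) : lo' <= lo -> hi <= hi' ->
  agrees_within G u lo hi -> agrees_within G u lo' hi'.
Proof.
move=> lo'_le hi_le [p [q [[? ? ? ? ?] Gu]]].
by exists p, q; split=> //; split; lra.
Qed.

Lemma agrees_withinN G u (lo hi : R) :
  agrees_within G u lo hi -> agrees_within G (- u) lo hi.
Proof.
move=> [p [q [[? ? ? ? ?] Gu]]]; exists (p - u.1), (q - u.1).
by split; [split => /=; lra | exact: agreesN].
Qed.

Section orbits.
Variables (G : set (plane R)) (lo hi : R).

Lemma agrees_natmul d w k : 0 <= d -> w.1 = - d -> agrees G w lo (hi - d) ->
  k%:R * d < hi - lo -> agrees G (w *+ k) lo (hi - k%:R * d).
Proof.
move=> d_ge0 w1 Gw; elim: k => [_|k IH]; first by rewrite mulr0n; exact: agrees0.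
have kd_ge0 : 0 <= k%:R * d by rewrite mulr_ge0.
have wk1 : (w *+ k).1 = - (k%:R * d) by rewrite pairMnE /= w1 mulNrn mulr_natl.
rewrite -natr1 mulrSr mulrDl mul1r => kd_lt.
by apply: agreesD; [apply: agreesS (IH _) | apply: agreesS Gw]; rewrite ?wk1; lra.
Qed.

(* A rotation by d' modulo d: step by w', then back by w once the shifted
   window has left [lo, lo + d]. *)
Lemma agrees_within_step d d' w w' u : 0 <= d' <= d -> d + d' <= hi - lo ->
  w.1 = - d -> w'.1 = - d' -> agrees G w lo (hi - d) -> agrees G w' lo (hi - d') ->
  agrees_within G u lo (lo + d) ->
  agrees_within G (u + w') lo (lo + d) \/ agrees_within G (u + w' - w) lo (lo + d).
Proof.
move=> /andP[d'_ge0 d'_le] dd'_le w1 w'1 Gw Gw' [p [q [[lo_p pq q_d lo_pu qu_d] Gu]]].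
have Guw' : agrees G (u + w') p q by apply: agreesD Gu (agreesS _ _ Gw'); lra.
have uw'1 : (u + w').1 = u.1 - d' by rewrite /= w'1.
have [p_low|p_high] := ltP (p - (u.1 - d')) (lo + d).
- left; have [q_low|q_high] := leP (q - (u.1 - d')) (lo + d).
    by exists p, q; split => //; rewrite uw'1; split; lra.
  exists p, (lo + d + (u.1 - d')); split; last by apply: agreesS Guw'; lra.
  by rewrite uw'1; split; lra.
- right; exists p, q; split; first by rewrite /= w1 w'1; split; lra.
  by apply: agreesD Guw' (agreesS _ _ (agreesN Gw)); rewrite uw'1 w1; lra.
Qed.

(* The linear form u |-> u.2 * d + u.1 * w.2 vanishes on w. *)
Lemma agrees_within_orbit d d' w w' (n : nat) : 0 < d -> 0 <= d' <= d ->
  d + d' <= hi - lo -> w.1 = - d -> w'.1 = - d' ->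
  agrees G w lo (hi - d) -> agrees G w' lo (hi - d') ->
  exists u, agrees_within G u lo (lo + d) /\
            u.2 * d + u.1 * w.2 = n%:R * (w'.2 * d - d' * w.2).
Proof.
move=> d_gt0 d'_bounds dd'_le w1 w'1 Gw Gw'; elim: n => [|n [u [Gu u_n]]].
  exists 0; split; last by rewrite /= !mul0r addr0.
  by exists lo, (lo + d); split; [split => /=; lra | exact: agrees0].
have step_n u' : u'.2 * d + u'.1 * w.2 = u.2 * d + u.1 * w.2 + (w'.2 * d - d' * w.2) ->
    u'.2 * d + u'.1 * w.2 = n.+1%:R * (w'.2 * d - d' * w.2).
  by move=> ->; rewrite u_n -natr1 mulrDl mul1r.
have [Gu'|Gu'] := agrees_within_step d'_bounds dd'_le w1 w'1 Gw Gw' Gu;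
  [exists (u + w') | exists (u + w' - w)]; split => //; apply: step_n; rewrite /= ?w1 w'1; ring.
Qed.

End orbits.

Section agreement_bounds.
Variables (G : set (plane R)) (eps lo hi : R).
Hypothesis G_upper : forall x, lo <= x.1 <= hi -> 0 <= x.2 -> G x.
Hypothesis G_lower : forall x, G x -> - eps <= x.2.

Lemma agrees_within_bound u : agrees_within G u lo hi -> `|u.2| <= eps.
Proof.
wlog u2_ge0 : u / 0 <= u.2.
  move=> wlog_u Gu; have [u2_ge0|u2_lt0] := leP 0 u.2; first exact: wlog_u u2_ge0 Gu.
  rewrite -normrN -[- u.2]/((- u).2).
  by apply: wlog_u; [rewrite /=; lra | exact: agrees_withinN].
move=> [p [q [[lo_p pq q_hi _ _] Gu]]]; rewrite ger0_norm // leNgt.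
apply/negP => eps_lt_u2.
apply: (@null2_rectangle _ p q 0 ((u.2 - eps) / 2)); [by [] | lra |].
apply: negligibleS Gu => x /= [/andP[px xq] /andP[x2_ge0 x2_le]].
right; split; last by move=> [/G_lower /=]; lra.
by split; [apply: G_upper => //; apply/andP; split; lra | apply/andP].
Qed.

Lemma agrees_slope d w : 0 < d -> d < hi - lo -> w.1 = - d ->
  agrees G w lo (hi - d) -> `|w.2| * (hi - lo - d) <= eps * d.
Proof.
move=> d_gt0 d_lt w1 Gw.
have L_gt0 : 0 < hi - lo by lra.
have [k /andP[kd_lt kd_ge]] := exists_natr_mul_bracket d_gt0 L_gt0.
have wk1 : (w *+ k).1 = - (k%:R * d) by rewrite pairMnE /= w1 mulNrn mulr_natl.
have : agrees_within G (w *+ k) lo hi.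
  exists lo, (hi - k%:R * d); split; last exact: agrees_natmul (ltW d_gt0) w1 Gw kd_lt.
  by split; rewrite ?wk1; lra.
move=> /agrees_within_bound; rewrite pairMnE /= normrMn -mulr_natl => k_w2.
apply: le_trans (_ : `|w.2| * (k%:R * d) <= _).
  by apply: ler_wpM2l => //; move: kd_ge; rewrite -natr1 mulrDl mul1r; lra.
by rewrite mulrA [`|w.2| * _]mulrC ler_wpM2r // ltW.
Qed.

Lemma agrees_collinear d d' w w' : 0 < d -> 0 <= d' <= d -> d + d' <= hi - lo ->
  w.1 = - d -> w'.1 = - d' -> agrees G w lo (hi - d) -> agrees G w' lo (hi - d') ->
  w'.1 * w.2 = w'.2 * w.1.
Proof.
move=> d_gt0 d'_bounds dd'_le w1 w'1 Gw Gw'.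
rewrite w1 w'1 mulrN mulNr; congr (- _); apply/esym/eqP; rewrite -subr_eq0; apply/eqP.
apply: (@natr_mul_bounded_eq0 _ (eps * d + `|w.2| * d)) => n.
have [u [Gu <-]] := agrees_within_orbit n d_gt0 d'_bounds dd'_le w1 w'1 Gw Gw'.
have u2_le : `|u.2| <= eps.
  by apply: agrees_within_bound; apply: agrees_withinS Gu; lra.
have u1_le : `|u.1| <= d.
  by case: Gu => p [q [[? ? ? ? ?] _]]; rewrite ler_norml; apply/andP; split; lra.
apply: le_trans (ler_normD _ _) _; rewrite !normrM (gtr0_norm d_gt0).
by apply: lerD; [rewrite ler_wpM2r // ltW | rewrite mulrC ler_wpM2l].
Qed.

End agreement_bounds.

Lemma E1I_strip (E : set (plane R)) (c d d' : R) : d <= d' ->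
  E1 E c d' `&` strip c d = E1 E c d.
Proof.
move=> dd'; apply/seteqP; split => x; first by move=> [[[Ex [_ x2]]|[_ x2]] cxd]; [left|right].
have widen : c <= x.1 <= d -> c <= x.1 <= d' by move=> /andP[? ?]; apply/andP; split; lra.
by move=> [[Ex [cxd x2]]|[cxd x2]]; split=> //; [left; split=> //; split | right; split];
  rewrite ?widen.
Qed.

Lemma E2I_strip (E : set (plane R)) (c c' d : R) : c <= c' ->
  E2 E c d `&` strip c' d = E2 E c' d.
Proof.
move=> cc'; apply/seteqP; split => x; first by move=> [[[Ex [_ x2]]|[_ x2]] cxd]; [left|right].
have widen : c' <= x.1 <= d -> c <= x.1 <= d by move=> /andP[? ?]; apply/andP; split; lra.
by move=> [[Ex [cxd x2]]|[cxd x2]]; split=> //; [left; split=> //; split | right; split];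
  rewrite ?widen.
Qed.

Lemma complements_fst (E : set (plane R)) (h c d c' d' : R) v :
  c < d -> c' < d' -> E `<=` [set x | x.2 <= h] ->
  complements E c d c' d' v -> v.1 = c - c'.
Proof.
move=> cd c'd' E_le [_ S_AB]; set A := E2 E c d in S_AB; set B := translate _ _ in S_AB.
have B_strip : B `<=` strip (c' + v.1) (d' + v.1).
  by rewrite -translate_strip => x [[_ []]|[]].
have A_low x : A x -> x.2 <= `|h|.
  move=> [[/E_le /= xh _]|[_ x2]]; first exact: le_trans xh (ler_norm h).
  exact: le_trans x2 (normr_ge0 h).
apply/eqP; rewrite eq_le; apply/andP; split.
- suff : c' + v.1 <= c by lra.
  apply: (@rectangle_ae_strip_ge _ c d (`|h| + 1) (`|h| + 2)) => //; first lra.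
  apply: negligibleS S_AB => x /= [[/andP[cx xd] /andP[hx _]] nBx]; left.
  split; first by apply/andP.
  by case=> [/A_low|/B_strip]; [lra | exact: nBx].
- suff : c <= c' + v.1 by lra.
  apply: (@rectangle_ae_strip_ge _ (c' + v.1) (d' + v.1) v.2 (v.2 + 1)); [lra | lra |].
  apply: negligibleS S_AB => x /= [[/andP[cx xd] /andP[vx _]] nSx]; right.
  split; last exact: nSx.
  right; rewrite /B /translate /E1 /=; right; split; last lra.
  by apply/andP; split; lra.
Qed.

Lemma complements_agree (E : set (plane R)) (a b s s1 : R) v v1 :
  s1 <= s -> v1.1 = b - s1 - a ->
  complements E (b - s) b a (a + s) v -> complements E (b - s1) b a (a + s1) v1 ->
  agrees (E1 E a (a + s)) (v - v1) a (a + s1).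
Proof.
move=> s1_le v1E [AB S_AB] [AB1 S_AB1].
set G := E1 E a (a + s); set A := E2 E (b - s) b; set S1 := strip (b - s1) b.
have S1_sub : S1 `<=` strip (b - s) b.
  by move=> x /andP[? ?]; apply/andP; split; lra.
have B1_ae : ae_eq2 (translate G v1 `&` S1) (S1 `\` A).
  have a_le : a + s1 <= a + s by lra.
  have b_le : b - s <= b - s1 by lra.
  have e1 : a + v1.1 = b - s1 by rewrite v1E; ring.
  have e2 : a + s1 + v1.1 = b by rewrite v1E; ring.
  have := ae_eq2_complement AB1 S_AB1.
  rewrite -(E1I_strip E a a_le) -(E2I_strip E b b_le) translateI translate_strip e1 e2.
  rewrite (_ : S1 `\` (A `&` S1) = S1 `\` A) //.
  apply/seteqP; split => x [S1x nAx]; split => //.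
  - by move=> Ax; apply: nAx.
  - by move=> [Ax _]; apply: nAx.
have translates_agree : ae_eq2 (translate G v `&` S1) (translate G v1 `&` S1).
  apply: ae_eq2_trans (ae_eq2_setI S1 (ae_eq2_complement AB S_AB)) _.
  rewrite (_ : (strip (b - s) b `\` A) `&` S1 = S1 `\` A); first exact: ae_eq2_sym.
  apply/seteqP; split => x; first by move=> [[_ ?] ?].
  by move=> [S1x ?]; split => //; split => //; exact: S1_sub.
have := ae_eq2_translate (- v1) translates_agree.
rewrite !translateI !translate_translate subrr translate0 translate_strip.
have -> // : strip (b - s1 + (- v1).1) (b + (- v1).1) = strip a (a + s1).
by rewrite /= v1E; congr strip; ring.
Qed.

End strip_agreement.

Theorem lemma3p1 (R : realType) (eps : R) (E : set (plane R))
  (s s' s'' a b : R) (v v' v'' : R * R) :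
  0 < eps ->
  leb_measurable2 E ->
  square 0 1 `<=` E -> E `<=` square (- eps) (1 + eps) ->
  0 < s'' -> s'' < s' -> s' < s -> s < 2 * s'' ->
  0 <= a -> a + s <= 1 -> 0 <= b - s -> b <= 1 ->
  complements E (b - s) b a (a + s) v ->
  complements E (b - s') b a (a + s') v' ->
  complements E (b - s'') b a (a + s'') v'' ->
  (v'.1 - v.1) * (v''.2 - v.2) = (v'.2 - v.2) * (v''.1 - v.1) /\
  (v <> v'' ->
     v''.1 != v.1 /\
     `|(v''.2 - v.2) / (v''.1 - v.1)| <= eps / (2 * s'' - s)).
Proof.
move=> eps_gt0 _ _ E_sq s''_gt0 s''_lt s'_lt s_lt a_ge0 as_le bs_ge0 b_le C C' C''.
have E_le : E `<=` [set x | x.2 <= 1 + eps] by move=> x /E_sq [_ /andP[]].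
have v1 : v.1 = b - s - a by apply: complements_fst E_le C; lra.
have v'1 : v'.1 = b - s' - a by apply: complements_fst E_le C'; lra.
have v''1 : v''.1 = b - s'' - a by apply: complements_fst E_le C''; lra.
set G := E1 E a (a + s).
have G_upper x : a <= x.1 <= a + s -> 0 <= x.2 -> G x by move=> ? ?; right.
have G_lower x : G x -> - eps <= x.2.
  by move=> [[/E_sq [_ /andP[]] _]|[_ x2]] //; lra.
have Gw : agrees G (v - v'') a (a + s - (s - s'')).
  by apply: agreesS (complements_agree _ v''1 C C''); lra.
have Gw' : agrees G (v - v') a (a + s - (s - s')).
  by apply: agreesS (complements_agree _ v'1 C C'); lra.
have w1 : (v - v'').1 = - (s - s'') by rewrite /= v1 v''1; ring.
have w'1 : (v - v').1 = - (s - s') by rewrite /= v1 v'1; ring.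
have d_gt0 : 0 < s - s'' by lra.
split.
- have d'_bounds : 0 <= s - s' <= s - s'' by apply/andP; split; lra.
  have dd'_le : s - s'' + (s - s') <= a + s - a by lra.
  have /= := agrees_collinear G_upper G_lower d_gt0 d'_bounds dd'_le w1 w'1 Gw Gw'.
  by rewrite -[v.1 - _]opprB -[v.2 - v'.2]opprB -[v.2 - v''.2]opprB -[v.1 - v''.1]opprB !mulrNN.
- move=> _; have d_lt : s - s'' < a + s - a by lra.
  have /= := agrees_slope G_upper G_lower d_gt0 d_lt w1 Gw.
  rewrite distrC (_ : a + s - a - (s - s'') = s'') => [slope|]; last ring.
  rewrite v1 v''1 (_ : b - s'' - a - (b - s - a) = s - s''); last ring.
  split; first by apply/eqP => ?; lra.
  rewrite normrM normfV (gtr0_norm d_gt0) ler_pdivrMr // mulrAC ler_pdivlMr; last lra.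
  by apply: le_trans slope; apply: ler_wpM2l => //; lra.
Qed.
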